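(* Let $N\geq 0$ be an integer. Then for all real $t$, \[ \tanh t=\sum_{j=1}^{N}\frac{2^{2j}(2^{2j}-1)B_{2j}}{(2j)!}\,t^{2j-1}+\tau_N(t),\qquad \tau_N(t)=(-1)^N\frac{2^{2N+3}t^{2N+1}}{\pi^{2N}}\sum_{k=1}^{\infty}\frac{1}{(2k-1)^{2N}\bigl(\pi^2(2k-1)^2+4t^2\bigr)}. \] Moreover, for every real $t\neq 0$, \[ \tanh t=\sum_{j=1}^{N}\frac{2^{2j}(2^{2j}-1)B_{2j}}{(2j)!}\,t^{2j-1}+\xi(t,N)\,\frac{2^{2N+2}(2^{2N+2}-1)B_{2N+2}}{(2N+2)!}\,t^{2N+1} \] for some number $\xi(t,N)$ with $0<\xi(t,N)<1$.
   Context: The Bernoulli numbers $B_n$ are defined by $\frac{t}{e^t-1}=\sum_{n=0}^\infty B_n\frac{t^n}{n!}$ for $|t|<2\pi$. An empty sum is understood to be zero. *)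

From Stdlib Require Import Reals Arith.
Open Scope R_scope.

(* B is the sequence of Bernoulli numbers: t/(e^t-1) = sum_n B_n t^n/n!
   for 0 < |t| < 2*pi (at t = 0 the left side is understood as its limit 1;
   the punctured disc already determines B uniquely). *)
Definition is_bernoulli (B : nat -> R) : Prop :=
  forall t : R, 0 < Rabs t < 2 * PI ->
    infinite_sum (fun n : nat => B n * t ^ n / INR (fact n)) (t / (exp t - 1)).

Fixpoint sum1 (N : nat) (f : nat -> R) : R :=
  match N with
  | O => 0
  | S n => sum1 n f + f (S n)
  end.

Definition tanh_term (B : nat -> R) (t : R) (j : nat) : R :=
  2 ^ (2 * j)%nat * (2 ^ (2 * j)%nat - 1) * B (2 * j)%nat / INR (fact (2 * j))
  * t ^ (2 * j - 1)%nat.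

From Stdlib Require Import Reals Arith Lra Lia.
From Coquelicot Require Import Coquelicot.
Open Scope R_scope.

(* Iterating the duplication formula for [sinh u / (cosh u - cos a)] writes [tanh y] as a
   sum of [2^p] such terms; as [p -> oo] they tend to [8 y / (PI^2 (2k+1)^2 + 4 y^2)], and
   Tannery's theorem gives the partial fraction expansion of [tanh].  Peeling off one
   geometric term at a time yields [tanh t = sum_(j<N) c_j t^(2j+1) + tau_N(t)] with
   [c_j = (-1)^j 2^(2j+3) lambda(2j+2) / PI^(2j+2)], [lambda(s) = sum_k (2k+1)^-s].
   Since [tau_N(t) = O(t^(2N+1))], comparing with the Bernoulli expansion of
   [t tanh t - t = 4t/(e^(4t)-1) - 2t/(e^(2t)-1)] identifies [c_j] with the Bernoulli
   coefficients.  Finally [tau_N(t) = xi c_N t^(2N+1)] with [xi = PI^2 S_N(t) / lambda(2N+2)],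
   and [0 < xi < 1] because [PI^2 (2k+1)^2 < PI^2 (2k+1)^2 + 4 t^2] termwise. *)

(** * Finite sums and series *)

Fixpoint fsum (n : nat) (f : nat -> R) : R :=
  match n with O => 0 | S n => fsum n f + f n end.

Lemma fsum_ext n f g : (forall k, (k < n)%nat -> f k = g k) -> fsum n f = fsum n g.
Proof.
  induction n as [|n IH]; intros Hfg; simpl; [reflexivity|].
  rewrite IH by (intros; apply Hfg; lia). rewrite Hfg by lia; reflexivity.
Qed.

Lemma fsum_plus n f g : fsum n (fun k => f k + g k) = fsum n f + fsum n g.
Proof. induction n as [|n IH]; simpl; [lra|]. rewrite IH; lra. Qed.

Lemma fsum_minus n f g : fsum n (fun k => f k - g k) = fsum n f - fsum n g.
Proof. induction n as [|n IH]; simpl; [lra|]. rewrite IH; lra. Qed.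

Lemma fsum_scal n c f : fsum n (fun k => c * f k) = c * fsum n f.
Proof. induction n as [|n IH]; simpl; [lra|]. rewrite IH; lra. Qed.

Lemma fsum_const n c : fsum n (fun _ => c) = INR n * c.
Proof. induction n as [|n IH]; simpl fsum; [simpl; ring|]. rewrite IH, S_INR; ring. Qed.

Lemma fsum_add a b f : fsum (a + b) f = fsum a f + fsum b (fun k => f (a + k)%nat).
Proof.
  induction b as [|b IH]; simpl; [rewrite Nat.add_0_r; lra|].
  rewrite Nat.add_succ_r; simpl. rewrite IH; lra.
Qed.

Lemma fsum_rev n f : fsum n (fun k => f (n - 1 - k)%nat) = fsum n f.
Proof.
  induction n as [|n IH]; [reflexivity|].
  change (fsum (1 + n) (fun k => f (S n - 1 - k)%nat) = fsum (S n) f).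
  rewrite fsum_add, (fsum_ext n _ (fun k => f (n - 1 - k)%nat))
    by (intros k _; cbv beta; f_equal; lia).
  rewrite IH. simpl. rewrite !Nat.sub_0_r. lra.
Qed.

Lemma fsum_abs n f : Rabs (fsum n f) <= fsum n (fun k => Rabs (f k)).
Proof.
  induction n as [|n IH]; simpl; [rewrite Rabs_R0; lra|].
  eapply Rle_trans; [apply Rabs_triang|lra].
Qed.

Lemma fsum_le n f g : (forall k, (k < n)%nat -> f k <= g k) -> fsum n f <= fsum n g.
Proof.
  induction n as [|n IH]; intros Hfg; simpl; [lra|].
  assert (f n <= g n) by (apply Hfg; lia).
  assert (fsum n f <= fsum n g) by (apply IH; intros; apply Hfg; lia). lra.
Qed.

Lemma fsum_sum_f_R0 n f : fsum (S n) f = sum_f_R0 f n.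
Proof. induction n as [|n IH]; simpl in *; [lra|]. rewrite <- IH; reflexivity. Qed.

Lemma is_series_fsum a K : (forall n, (K <= n)%nat -> a n = 0) -> is_series a (fsum K a).
Proof.
  intros Ha. apply is_series_Reals. intros eps Heps. exists K. intros n Hn.
  rewrite <- fsum_sum_f_R0. replace (S n) with (K + (S n - K))%nat by lia.
  rewrite fsum_add, (fsum_ext (S n - K) (fun k => a (K + k)%nat) (fun _ => 0))
    by (intros k _; apply Ha; lia).
  rewrite fsum_const. unfold Rdist. replace (fsum K a + INR (S n - K) * 0 - fsum K a) with 0 by ring.
  rewrite Rabs_R0; lra.
Qed.

Lemma Series_nonneg a : (forall n, 0 <= a n) -> ex_series a -> 0 <= Series a.
Proof.
  intros Ha Hex.
  assert (H0 : is_series (fun _ : nat => 0) 0) by exact (is_series_fsum _ 0 (fun _ _ => eq_refl)).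
  rewrite <- (is_series_unique _ _ H0).
  apply Series_le; [|exact Hex]. intros n; split; [lra|apply Ha].
Qed.

Lemma fsum_le_Series a n : (forall n, 0 <= a n) -> ex_series a -> fsum n a <= Series a.
Proof.
  intros Ha Hex. destruct n as [|n]; [apply Series_nonneg; auto|].
  rewrite (Series_incr_n a (S n)) by (auto; lia). simpl (Nat.pred (S n)).
  rewrite fsum_sum_f_R0.
  pose proof (Series_nonneg (fun k => a (S n + k)%nat) (fun k => Ha _)
    (proj1 (ex_series_incr_n a (S n)) Hex)). lra.
Qed.

Lemma Series_pos a l : (forall n, 0 < a n) -> is_series a l -> 0 < l.
Proof.
  intros Ha Hl. rewrite <- (is_series_unique _ _ Hl).
  assert (Hex : ex_series a) by (exists l; exact Hl).
  pose proof (fsum_le_Series a 1 (fun n => Rlt_le _ _ (Ha n)) Hex) as H1.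
  simpl in H1. specialize (Ha O). lra.
Qed.

Lemma Series_fsum_close a : ex_series a -> forall eps, 0 < eps ->
  exists K, forall n, (K <= n)%nat -> Rabs (Series a - fsum n a) < eps.
Proof.
  intros Hex eps Heps. pose proof (proj1 (is_series_Reals _ _) (Series_correct a Hex)) as Hs.
  destruct (Hs eps Heps) as [K HK]. exists (S K). intros [|n] Hn; [lia|].
  rewrite fsum_sum_f_R0, Rabs_minus_sym. apply HK; lia.
Qed.

Lemma ex_series_Rabs_le (a b : nat -> R) :
  (forall n, Rabs (a n) <= b n) -> ex_series b -> ex_series a.
Proof. intros Hab. apply (@ex_series_le R_AbsRing R_CompleteNormedModule), Hab. Qed.

Lemma is_series_lin (a b : nat -> R) la lb (al be : R) :
  is_series a la -> is_series b lb -> is_series (fun n => al * a n + be * b n) (al * la + be * lb).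
Proof.
  intros Ha Hb.
  exact (is_series_plus _ _ _ _ (is_series_scal_l al _ _ Ha) (is_series_scal_l be _ _ Hb)).
Qed.

Lemma eventually_close_fin (u : nat -> nat -> R) (L : nat -> R) K eps : 0 < eps ->
  (forall k, is_lim_seq (fun p => u p k) (L k)) ->
  exists P, forall p, (P <= p)%nat -> forall k, (k < K)%nat -> Rabs (u p k - L k) < eps.
Proof.
  intros Heps Hu. induction K as [|K [P1 HP1]]; [exists O; intros; lia|].
  destruct (proj1 (is_lim_seq_Reals _ _) (Hu K) eps Heps) as [P2 HP2].
  exists (Nat.max P1 P2). intros p Hp k Hk.
  destruct (Nat.eq_dec k K) as [->|Hne]; [apply HP2; lia | apply HP1; lia].
Qed.

(** * Tannery's theorem *)

Section Tannery.

Variables (w : nat -> nat -> R) (L D : nat -> R) (n : nat -> nat) (c : R).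
Hypothesis w_lim : forall k, is_lim_seq (fun p => w p k) (L k).
Hypothesis w_dom : forall p k, (k < n p)%nat -> Rabs (w p k) <= D k.
Hypothesis D_summable : ex_series D.
Hypothesis n_unbounded : forall p, (p <= n p)%nat.
Hypothesis w_sum : forall p, fsum (n p) (w p) = c.

Lemma tannery_lim_dom k : Rabs (L k) <= D k.
Proof.
  refine (is_lim_seq_le_loc _ _ _ _ _ (is_lim_seq_abs _ _ (w_lim k)) (is_lim_seq_const (D k))).
  exists (S k). intros p Hp. apply w_dom. pose proof (n_unbounded p); lia.
Qed.

Lemma tannery_tail_small e : 0 < e -> exists K1, forall K0 p, (K1 <= K0)%nat -> (K0 <= n p)%nat ->
  Rabs (fsum (n p - K0) (fun k => w p (K0 + k)%nat)) < e.
Proof.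
  intros He. destruct (Series_fsum_close D D_summable e He) as [K1 HK1]. exists K1.
  intros K0 p HK Hp. assert (HD : forall k, 0 <= D k)
    by (intros k; eapply Rle_trans; [apply Rabs_pos|apply tannery_lim_dom]).
  eapply Rle_lt_trans; [apply fsum_abs|].
  eapply Rle_lt_trans;
    [apply (fsum_le _ _ (fun k => D (K0 + k)%nat)); intros; cbv beta; apply w_dom; lia|].
  pose proof (fsum_add K0 (n p - K0) D) as Hadd.
  replace (K0 + (n p - K0))%nat with (n p) in Hadd by lia.
  pose proof (fsum_le_Series D (n p) HD D_summable).
  pose proof (fsum_le_Series D K0 HD D_summable).
  specialize (HK1 K0 HK). rewrite Rabs_pos_eq in HK1 by lra. lra.
Qed.

Theorem tannery : is_series L c.
Proof.
  assert (HL : ex_series L) by exact (ex_series_Rabs_le L D tannery_lim_dom D_summable).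
  replace c with (Series L); [apply Series_correct, HL|].
  apply cond_eq. intros eps Heps. set (e := eps / 3). assert (He : 0 < e) by (unfold e; lra).
  destruct (tannery_tail_small e He) as [K1 HK1].
  destruct (Series_fsum_close L HL e He) as [K2 HK2].
  set (K0 := Nat.max K1 K2). set (e' := e / (INR K0 + 1)).
  assert (He' : 0 < e') by (unfold e'; pose proof (pos_INR K0); apply Rdiv_lt_0_compat; lra).
  destruct (eventually_close_fin w L K0 e' He' w_lim) as [P HP].
  set (p := Nat.max P K0). assert (Hp : (K0 <= n p)%nat) by (pose proof (n_unbounded p); lia).
  rewrite <- (w_sum p). replace (n p) with (K0 + (n p - K0))%nat by lia. rewrite fsum_add.
  assert (Hhead : Rabs (fsum K0 (w p) - fsum K0 L) < e).
  { rewrite <- fsum_minus. eapply Rle_lt_trans; [apply fsum_abs|].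
    eapply Rle_lt_trans; [apply (fsum_le _ _ (fun _ => e')); intros; left; apply HP; lia|].
    rewrite fsum_const.
    assert (INR K0 * e' = e - e') by (unfold e'; field; pose proof (pos_INR K0); lra).
    lra. }
  specialize (HK1 K0 p (Nat.le_max_l _ _) Hp). specialize (HK2 K0 (Nat.le_max_r _ _)).
  apply Rabs_def2 in HK1, HK2, Hhead. apply Rabs_def1; unfold e in *; lra.
Qed.

End Tannery.

(** * Partial fraction expansion of [tanh] *)

Lemma odd_ge_1 k : 1 <= 2 * INR k + 1.
Proof. pose proof (pos_INR k); lra. Qed.

Lemma is_series_telescoping_inv : is_series (fun k => / (INR k + 1) - / (INR k + 2)) 1.
Proof.
  assert (Hsum : forall n,
    sum_f_R0 (fun k => / (INR k + 1) - / (INR k + 2)) n = 1 - / (INR n + 2)).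
  { induction n as [|n IH]; [simpl; lra|].
    rewrite tech5, IH, S_INR. pose proof (pos_INR n). field. lra. }
  apply is_series_Reals. intros eps Heps.
  destruct (INR_unbounded (/ eps)) as [N HN]. exists N. intros n Hn.
  unfold Rdist. rewrite Hsum. apply le_INR in Hn. pose proof (pos_INR n).
  assert (0 < / (INR n + 2) < eps); [|rewrite Rabs_left1; lra].
  split; [apply Rinv_0_lt_compat; lra|].
  rewrite <- (Rinv_inv eps). apply Rinv_lt_contravar; [|lra].
  apply Rmult_lt_0_compat; [apply Rinv_0_lt_compat|]; lra.
Qed.

Lemma ex_series_inv_odd_sq : ex_series (fun k => / (2 * INR k + 1) ^ 2).
Proof.
  apply (ex_series_Rabs_le _ (fun k => 2 * (/ (INR k + 1) - / (INR k + 2)))).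
  - intros k. pose proof (pos_INR k).
    rewrite Rabs_pos_eq by (apply Rlt_le, Rinv_0_lt_compat; nra).
    replace (2 * (/ (INR k + 1) - / (INR k + 2))) with (/ ((INR k + 1) * (INR k + 2) / 2))
      by (field; lra).
    apply Rinv_le_contravar; nra.
  - exists (2 * 1). apply (is_series_scal_l 2 _ 1), is_series_telescoping_inv.
Qed.

Lemma exp_double u : exp (2 * u) = exp u * exp u.
Proof. replace (2 * u) with (u + u) by ring. apply exp_plus. Qed.

Lemma sinh_double u : sinh (2 * u) = 2 * sinh u * cosh u.
Proof.
  unfold sinh, cosh. rewrite !exp_Ropp, exp_double.
  pose proof (exp_pos u). field. lra.
Qed.

Lemma cosh_double u : cosh (2 * u) = 2 * cosh u ^ 2 - 1.
Proof.
  unfold cosh. rewrite !exp_Ropp, exp_double.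
  pose proof (exp_pos u). field. lra.
Qed.

Lemma cosh_half u : cosh u = 1 + 2 * sinh (u / 2) ^ 2.
Proof.
  replace u with (2 * (u / 2)) at 1 by field. rewrite cosh_double.
  unfold sinh, cosh. rewrite exp_Ropp. pose proof (exp_pos (u / 2)). field. lra.
Qed.

Lemma sinh_neq_0 u : u <> 0 -> sinh u <> 0.
Proof.
  intros Hu. rewrite <- sinh_0.
  destruct (Rlt_or_le u 0) as [H|H]; [|assert (H' : 0 < u) by lra];
  [apply Rlt_not_eq | apply Rgt_not_eq]; apply sinh_lt; assumption.
Qed.

Lemma cosh_ge_1 u : 1 <= cosh u.
Proof. rewrite cosh_half. pose proof (pow2_ge_0 (sinh (u / 2))). lra. Qed.

Lemma cosh_gt_1 u : u <> 0 -> 1 < cosh u.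
Proof.
  intros Hu. rewrite cosh_half.
  assert (0 < sinh (u / 2) ^ 2) by (apply pow2_gt_0, sinh_neq_0; lra). lra.
Qed.

Definition hyp_ratio (u a : R) : R := sinh u / (cosh u - cos a).

Lemma tanh_hyp_ratio y : tanh y = hyp_ratio (2 * y) PI.
Proof.
  unfold tanh, hyp_ratio. rewrite sinh_double, cosh_double, cos_PI.
  pose proof (cosh_ge_1 y). field. split; nra.
Qed.

Lemma hyp_ratio_dup u a : hyp_ratio u a + hyp_ratio u (a + PI) = 2 * hyp_ratio (2 * u) (2 * a).
Proof.
  unfold hyp_ratio. destruct (Req_dec u 0) as [->|Hu].
  - rewrite Rmult_0_r, sinh_0. unfold Rdiv. ring.
  - rewrite neg_cos, sinh_double, cosh_double, cos_2a_cos.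
    pose proof (cosh_gt_1 u Hu). pose proof (COS_bound a). field. repeat split; nra.
Qed.

Lemma hyp_ratio_iter m u a : hyp_ratio u a =
  / 2 ^ m * fsum (2 ^ m) (fun k => hyp_ratio (u / 2 ^ m) ((a + 2 * INR k * PI) / 2 ^ m)).
Proof.
  induction m as [|m IH].
  - simpl. rewrite !Rdiv_1_r, Rmult_0_r, Rmult_0_l, Rplus_0_r. field.
  - rewrite IH. replace (2 ^ S m)%nat with (2 ^ m + 2 ^ m)%nat by (simpl; lia).
    pose proof (pow_lt 2 m ltac:(lra)) as H2m.
    rewrite fsum_add, <- fsum_plus. symmetry.
    rewrite (fsum_ext _ _ (fun k => 2 * hyp_ratio (u / 2 ^ m) ((a + 2 * INR k * PI) / 2 ^ m))).
    + rewrite fsum_scal. simpl pow. field. lra.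
    + intros k _. rewrite plus_INR, pow_INR. replace (INR 2) with 2 by (simpl; ring).
      replace ((a + 2 * (2 ^ m + INR k) * PI) / 2 ^ S m)
        with ((a + 2 * INR k * PI) / 2 ^ S m + PI) by (simpl; field; lra).
      rewrite hyp_ratio_dup. f_equal. f_equal; simpl; field; lra.
Qed.

Definition tanh_approx (y : R) (p k : nat) : R :=
  / 2 ^ p * hyp_ratio (y / 2 ^ p) ((2 * INR k + 1) * PI / 2 ^ S p).

Lemma tanh_eq_fsum_approx y p : tanh y = fsum (2 ^ p) (tanh_approx y p).
Proof.
  pose proof (pow_lt 2 p ltac:(lra)) as H2p.
  rewrite tanh_hyp_ratio, (hyp_ratio_iter (S p)).
  replace (2 ^ S p)%nat with (2 ^ p + 2 ^ p)%nat by (simpl; lia). rewrite fsum_add.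
  (* The upper half of the angles mirrors the lower half through [2 PI - x]. *)
  assert (Hmirror :
    fsum (2 ^ p) (fun k => hyp_ratio (2 * y / 2 ^ S p) ((PI + 2 * INR (2 ^ p + k) * PI) / 2 ^ S p))
    = fsum (2 ^ p) (fun k => hyp_ratio (2 * y / 2 ^ S p) ((PI + 2 * INR k * PI) / 2 ^ S p))).
  { rewrite <- fsum_rev. apply fsum_ext. intros k Hk. unfold hyp_ratio. do 2 f_equal.
    rewrite plus_INR, !minus_INR, pow_INR by (clear - Hk; set (M := (2 ^ p)%nat) in *; lia).
    replace (INR 2) with 2 by (simpl; ring). change (INR 1) with 1.
    replace ((PI + 2 * (2 ^ p + (2 ^ p - 1 - INR k)) * PI) / 2 ^ S p)
      with (2 * PI - (PI + 2 * INR k * PI) / 2 ^ S p) by (simpl; field; lra).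
    rewrite cos_minus, cos_2PI, sin_2PI. ring. }
  rewrite Hmirror. unfold tanh_approx. rewrite fsum_scal.
  rewrite (fsum_ext _ _ (fun k => hyp_ratio (y / 2 ^ p) ((2 * INR k + 1) * PI / 2 ^ S p)))
    by (intros; f_equal; simpl; field; lra).
  simpl pow. field. lra.
Qed.

Lemma derivable_pt_lim_seq f x l (h : nat -> R) :
  derivable_pt_lim f x l -> is_lim_seq h 0 -> (forall p, h p <> 0) ->
  is_lim_seq (fun p => (f (x + h p) - f x) / h p) l.
Proof.
  intros Hf Hh Hh0. apply is_lim_seq_Reals. intros eps Heps.
  destruct (Hf eps Heps) as [d Hd].
  destruct (proj1 (is_lim_seq_Reals _ _) Hh d (cond_pos d)) as [N HN].
  exists N. intros p Hp. apply Hd; [apply Hh0|].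
  specialize (HN p Hp). unfold Rdist in HN. rewrite Rminus_0_r in HN. exact HN.
Qed.

Definition scaled (f : R -> R) (a : R) (p : nat) : R := 2 ^ p * f (a / 2 ^ p).

Lemma is_lim_seq_scaled f a : f 0 = 0 -> derivable_pt_lim f 0 1 -> is_lim_seq (scaled f a) a.
Proof.
  intros Hf0 Hf. unfold scaled. destruct (Req_dec a 0) as [->|Ha].
  - apply (is_lim_seq_ext (fun _ => 0)); [|apply is_lim_seq_const].
    intros p. rewrite Rdiv_0_l, Hf0. ring.
  - assert (Hh : is_lim_seq (fun p => a / 2 ^ p) 0).
    { apply (is_lim_seq_ext (fun p => a * (/ 2) ^ p)).
      - intros p. rewrite pow_inv. reflexivity.
      - replace (Finite 0) with (Rbar_mult a 0) by (simpl; f_equal; ring).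
        apply is_lim_seq_scal_l, is_lim_seq_geom. rewrite Rabs_pos_eq; lra. }
    assert (Hh0 : forall p, a / 2 ^ p <> 0).
    { intros p. pose proof (pow_lt 2 p ltac:(lra)). unfold Rdiv.
      apply Rmult_integral_contrapositive_currified; [exact Ha|apply Rinv_neq_0_compat; lra]. }
    apply (is_lim_seq_ext (fun p => a * ((f (0 + a / 2 ^ p) - f 0) / (a / 2 ^ p)))).
    + intros p. rewrite Rplus_0_l, Hf0, Rminus_0_r. field. split; [apply pow_nonzero; lra|exact Ha].
    + replace (Finite a) with (Rbar_mult a 1) by (simpl; f_equal; ring).
      apply is_lim_seq_scal_l, (derivable_pt_lim_seq f 0 1 _ Hf Hh Hh0).
Qed.

Lemma is_lim_seq_scaled_sin a : is_lim_seq (scaled sin a) a.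
Proof. apply is_lim_seq_scaled; [apply sin_0|]. rewrite <- cos_0. apply derivable_pt_lim_sin. Qed.

Lemma is_lim_seq_scaled_sinh a : is_lim_seq (scaled sinh a) a.
Proof. apply is_lim_seq_scaled; [apply sinh_0|]. rewrite <- cosh_0. apply derivable_pt_lim_sinh. Qed.

Definition tanh_pf_term (y : R) (k : nat) : R := 8 * y / (PI ^ 2 * (2 * INR k + 1) ^ 2 + 4 * y ^ 2).

Lemma tanh_approx_scaled y p k : y <> 0 ->
  tanh_approx y p k = scaled sinh y p /
    (2 * scaled sinh (y / 2) p ^ 2 + 2 * scaled sin ((2 * INR k + 1) * PI / 4) p ^ 2).
Proof.
  intros Hy. unfold tanh_approx, hyp_ratio, scaled. pose proof (pow_lt 2 p ltac:(lra)) as H2p.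
  rewrite (cosh_half (y / 2 ^ p)).
  replace ((2 * INR k + 1) * PI / 2 ^ S p) with (2 * ((2 * INR k + 1) * PI / 4 / 2 ^ p))
    by (simpl; field; lra).
  rewrite cos_2a_sin. replace (y / 2 ^ p / 2) with (y / 2 / 2 ^ p) by (field; lra).
  assert (Hs : sinh (y / 2 / 2 ^ p) <> 0).
  { apply sinh_neq_0. unfold Rdiv. intros H.
    apply Rmult_integral in H as [H|H]; [lra|revert H; apply Rinv_neq_0_compat; lra]. }
  assert (0 < (2 ^ p * sinh (y / 2 / 2 ^ p)) ^ 2)
    by (apply pow2_gt_0, Rmult_integral_contrapositive_currified; lra).
  assert (0 <= (2 ^ p * sin ((2 * INR k + 1) * PI / 4 / 2 ^ p)) ^ 2) by apply pow2_ge_0.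
  field. repeat split; nra.
Qed.

Lemma tanh_approx_lim y k : y <> 0 ->
  is_lim_seq (fun p => tanh_approx y p k) (tanh_pf_term y k).
Proof.
  intros Hy. set (c := (2 * INR k + 1) * PI / 4).
  apply (is_lim_seq_ext _ _ _ (fun p => eq_sym (tanh_approx_scaled y p k Hy))).
  replace (tanh_pf_term y k) with (y / (2 * (y / 2) ^ 2 + 2 * c ^ 2)).
  2:{ unfold tanh_pf_term, c. pose proof PI_RGT_0. pose proof (odd_ge_1 k). field. nra. }
  assert (Hsq : forall u (l : R), is_lim_seq u l -> is_lim_seq (fun p => u p ^ 2) (l ^ 2)).
  { intros u l Hu. apply (is_lim_seq_ext (fun p => u p * (u p * 1))); [intros; reflexivity|].
    apply is_lim_seq_mult', is_lim_seq_mult', is_lim_seq_const; exact Hu. }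
  apply is_lim_seq_div'; [apply is_lim_seq_scaled_sinh| |].
  - apply is_lim_seq_plus'; apply (is_lim_seq_scal_l _ 2 (Finite _)), Hsq;
      [apply is_lim_seq_scaled_sinh|apply is_lim_seq_scaled_sin].
  - unfold c. pose proof PI_RGT_0. pose proof (odd_ge_1 k). nra.
Qed.

Lemma sin_ge_third x : 0 <= x <= 2 -> x / 3 <= sin x.
Proof.
  intros Hx. assert (HPI : 2 < PI) by (pose proof PI2_1; lra).
  destruct (sin_bound x 0 ltac:(lra) ltac:(lra)) as [Hsin _].
  unfold sin_approx, sin_term in Hsin. simpl in Hsin. nra.
Qed.

Lemma scaled_sin_odd_ge p k : (k < 2 ^ p)%nat ->
  (2 * INR k + 1) / 6 <= scaled sin ((2 * INR k + 1) * PI / 4) p.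
Proof.
  intros Hk. unfold scaled. pose proof (pow_lt 2 p ltac:(lra)) as H2p.
  pose proof PI2_1. pose proof PI_4. pose proof (pos_INR k).
  assert (Hk' : INR k + 1 <= 2 ^ p).
  { pose proof (le_INR _ _ Hk) as HkS. rewrite S_INR, pow_INR in HkS.
    replace (INR 2) with 2 in HkS by (simpl; ring). exact HkS. }
  set (c := (2 * INR k + 1) * PI / 4).
  assert (Hc : 0 <= c / 2 ^ p <= 2).
  { split; [apply Rdiv_le_0_compat; unfold c; nra|].
    apply (Rmult_le_reg_r (2 ^ p)); [lra|]. unfold Rdiv. rewrite Rmult_assoc, Rinv_l by lra.
    unfold c; nra. }
  pose proof (sin_ge_third _ Hc) as Hs.
  apply (Rmult_le_compat_l (2 ^ p)) in Hs; [|lra].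
  replace (2 ^ p * (c / 2 ^ p / 3)) with (c / 3) in Hs by (field; lra).
  assert ((2 * INR k + 1) / 6 <= c / 3) by (unfold c; nra). lra.
Qed.

Lemma tanh_approx_dom y : y <> 0 -> exists M, forall p k, (k < 2 ^ p)%nat ->
  Rabs (tanh_approx y p k) <= M / (2 * INR k + 1) ^ 2.
Proof.
  intros Hy.
  destruct (maj_by_pos _ (exist _ y (proj1 (is_lim_seq_Reals _ _) (is_lim_seq_scaled_sinh y))))
    as [Ksh [HK0 HK]].
  exists (18 * Ksh). intros p k Hk. rewrite tanh_approx_scaled by exact Hy.
  pose proof (scaled_sin_odd_ge p k Hk) as Hsin. pose proof (odd_ge_1 k).
  set (s := scaled sinh (y / 2) p) in *.
  set (t := scaled sin ((2 * INR k + 1) * PI / 4) p) in *.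
  assert (Hden : (2 * INR k + 1) ^ 2 / 18 <= 2 * s ^ 2 + 2 * t ^ 2) by nra.
  assert (Hpos : 0 < (2 * INR k + 1) ^ 2 / 18) by nra.
  unfold Rdiv at 1. rewrite Rabs_mult, (Rabs_pos_eq (/ _)) by (apply Rlt_le, Rinv_0_lt_compat; lra).
  replace (18 * Ksh / (2 * INR k + 1) ^ 2) with (Ksh * / ((2 * INR k + 1) ^ 2 / 18)) by (field; lra).
  apply Rmult_le_compat; [apply Rabs_pos|apply Rlt_le, Rinv_0_lt_compat; lra|apply HK|].
  apply Rinv_le_contravar; assumption.
Qed.

Theorem tanh_partial_fractions y : is_series (tanh_pf_term y) (tanh y).
Proof.
  destruct (Req_dec y 0) as [->|Hy].
  - replace (tanh 0) with (fsum 0 (tanh_pf_term 0))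
      by (unfold tanh; rewrite sinh_0; simpl; field; pose proof (cosh_ge_1 0); lra).
    apply is_series_fsum. intros n _. unfold tanh_pf_term. rewrite Rmult_0_r. apply Rdiv_0_l.
  - destruct (tanh_approx_dom y Hy) as [M HM].
    apply (tannery (tanh_approx y) _ (fun k => M / (2 * INR k + 1) ^ 2) (fun p => 2 ^ p)%nat).
    + intros k. apply tanh_approx_lim, Hy.
    + exact HM.
    + apply (ex_series_scal_l M (fun k => / (2 * INR k + 1) ^ 2)), ex_series_inv_odd_sq.
    + intros p. apply Nat.lt_le_incl, Nat.pow_gt_lin_r. lia.
    + intros p. symmetry. apply tanh_eq_fsum_approx.
Qed.

(** * Expansion with remainder *)

Definition dirichlet_lambda (s : nat) : R := Series (fun k => / (2 * INR k + 1) ^ s).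

Definition rem_term (N : nat) (t : R) (k : nat) : R :=
  1 / ((2 * INR k + 1) ^ (2 * N) * (PI ^ 2 * (2 * INR k + 1) ^ 2 + 4 * t ^ 2)).

Definition rem_sum (N : nat) (t : R) : R := Series (rem_term N t).

Definition tanh_coef (N : nat) : R :=
  (-1) ^ N * 2 ^ (2 * N + 3) * dirichlet_lambda (2 * N + 2) / PI ^ (2 * N + 2).

Definition tanh_rem (N : nat) (t : R) : R :=
  (-1) ^ N * 2 ^ (2 * N + 3) * t ^ (2 * N + 1) / PI ^ (2 * N) * rem_sum N t.

Lemma PI2_ge_4 : 4 <= PI ^ 2.
Proof. pose proof PI2_1. nra. Qed.

Lemma inv_odd_pow_bounds s k : (2 <= s)%nat -> 0 < / (2 * INR k + 1) ^ s <= / (2 * INR k + 1) ^ 2.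
Proof.
  intros Hs. pose proof (odd_ge_1 k). split; [apply Rinv_0_lt_compat, pow_lt; lra|].
  apply Rinv_le_contravar; [apply pow_lt; lra|]. apply Rle_pow; [lra|exact Hs].
Qed.

Lemma rem_term_bounds N t k : 0 < rem_term N t k <= / (2 * INR k + 1) ^ 2.
Proof.
  unfold rem_term. pose proof (odd_ge_1 k). pose proof PI2_ge_4.
  assert (H1 : 1 <= (2 * INR k + 1) ^ (2 * N)) by (apply pow_R1_Rle; lra).
  assert (H2 : 1 <= (2 * INR k + 1) ^ 2) by nra.
  assert (H3 : 0 <= 4 * t ^ 2) by nra.
  rewrite Rdiv_1_l. split; [apply Rinv_0_lt_compat, Rmult_lt_0_compat; nra|].
  apply Rinv_le_contravar; [lra|].
  rewrite <- (Rmult_1_l ((2 * INR k + 1) ^ 2)) at 1. apply Rmult_le_compat; nra.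
Qed.

Lemma ex_series_inv_odd_pow s : (2 <= s)%nat -> ex_series (fun k => / (2 * INR k + 1) ^ s).
Proof.
  intros Hs. refine (ex_series_Rabs_le _ _ _ ex_series_inv_odd_sq). intros k.
  destruct (inv_odd_pow_bounds s k Hs). rewrite Rabs_pos_eq; lra.
Qed.

Lemma ex_series_rem_term N t : ex_series (rem_term N t).
Proof.
  refine (ex_series_Rabs_le _ _ _ ex_series_inv_odd_sq). intros k.
  destruct (rem_term_bounds N t k). rewrite Rabs_pos_eq; lra.
Qed.

Lemma rem_sum_rec N t :
  rem_sum N t = dirichlet_lambda (2 * N + 2) / PI ^ 2 - 4 * t ^ 2 / PI ^ 2 * rem_sum (S N) t.
Proof.
  unfold rem_sum, dirichlet_lambda. apply is_series_unique.
  replace (_ / PI ^ 2 - _) with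
    (/ PI ^ 2 * Series (fun k => / (2 * INR k + 1) ^ (2 * N + 2))
     + (- (4 * t ^ 2 / PI ^ 2)) * Series (rem_term (S N) t)) by (unfold Rdiv; ring).
  eapply is_series_ext; [|apply is_series_lin; apply Series_correct;
    [apply ex_series_inv_odd_pow; lia|apply ex_series_rem_term]].
  intros k. unfold rem_term. pose proof (odd_ge_1 k). pose proof PI2_ge_4.
  replace (2 * S N)%nat with (2 * N + 2)%nat by lia. rewrite !pow_add.
  assert (0 < (2 * INR k + 1) ^ (2 * N)) by (apply pow_lt; lra).
  assert (0 < PI ^ 2 * (2 * INR k + 1) ^ 2 + 4 * t ^ 2) by nra.
  match goal with |- ?a = ?b => change (@eq R a b) end. field. repeat split; nra.
Qed.

Lemma tanh_rem_succ N t : tanh_rem N t = tanh_coef N * t ^ (2 * N + 1) + tanh_rem (S N) t.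
Proof.
  unfold tanh_rem, tanh_coef. rewrite (rem_sum_rec N t).
  replace (2 * S N + 3)%nat with (2 * N + 3 + 2)%nat by lia.
  replace (2 * S N + 1)%nat with (2 * N + 1 + 2)%nat by lia.
  replace (2 * S N)%nat with (2 * N + 2)%nat by lia.
  rewrite !pow_add. simpl pow. pose proof PI_RGT_0.
  assert (0 < PI ^ (2 * N)) by (apply pow_lt; lra). field. split; [lra|apply pow_nonzero; lra].
Qed.

Theorem tanh_expand N t : tanh t = fsum N (fun j => tanh_coef j * t ^ (2 * j + 1)) + tanh_rem N t.
Proof.
  induction N as [|N IH]; [|rewrite IH, tanh_rem_succ; cbn [fsum]; ring].
  unfold tanh_rem, rem_sum. simpl fsum. simpl pow.
  rewrite <- (is_series_unique _ _ (tanh_partial_fractions t)), <- Series_scal_l.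
  rewrite Rplus_0_l. apply Series_ext. intros k. unfold tanh_pf_term, rem_term. simpl pow.
  pose proof (odd_ge_1 k). pose proof PI2_ge_4.
  assert (0 < PI ^ 2 * (2 * INR k + 1) ^ 2 + 4 * t ^ 2) by nra. field. lra.
Qed.

Lemma rem_sum_pos N t : 0 < rem_sum N t.
Proof.
  apply (Series_pos (rem_term N t)); [intros k; apply rem_term_bounds|].
  apply Series_correct, ex_series_rem_term.
Qed.

Lemma rem_sum_le N t : rem_sum N t <= rem_sum N 0.
Proof.
  apply Series_le; [|apply ex_series_rem_term]. intros k.
  destruct (rem_term_bounds N t k). split; [lra|].
  unfold rem_term. pose proof (odd_ge_1 k). pose proof PI2_ge_4.
  assert (0 < (2 * INR k + 1) ^ (2 * N)) by (apply pow_lt; lra).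
  rewrite !Rdiv_1_l. apply Rinv_le_contravar; [apply Rmult_lt_0_compat; nra|].
  apply Rmult_le_compat_l; nra.
Qed.

Lemma t_tanh_rem_bound N t :
  Rabs (t * tanh_rem N t) <= 2 ^ (2 * N + 3) / PI ^ (2 * N) * rem_sum N 0 * Rabs t ^ (2 * N + 2).
Proof.
  pose proof (rem_sum_pos N t). pose proof (rem_sum_le N t). pose proof PI_RGT_0.
  assert (HP : 0 < 2 ^ (2 * N + 3) / PI ^ (2 * N)) by (apply Rdiv_lt_0_compat; apply pow_lt; lra).
  unfold tanh_rem.
  replace (t * _) with ((-1) ^ N * (2 ^ (2 * N + 3) / PI ^ (2 * N) * rem_sum N t * t ^ (2 * N + 2)))
    by (replace (2 * N + 2)%nat with (S (2 * N + 1)) by lia; simpl; field; apply pow_nonzero; lra).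
  rewrite Rabs_mult, pow_1_abs, Rmult_1_l, !Rabs_mult, <- RPow_abs.
  rewrite (Rabs_pos_eq (_ / _)), (Rabs_pos_eq (rem_sum N t)) by lra.
  apply Rmult_le_compat_r; [apply pow_le, Rabs_pos|]. apply Rmult_le_compat_l; lra.
Qed.

(** * Identification of the coefficients *)

Lemma CV_radius_ge (a : nat -> R) x :
  ex_series (fun n => a n * x ^ n) -> Rbar_le (Rabs x) (CV_radius a).
Proof.
  intros Hex. apply (proj1 (CV_radius_bounded a)).
  pose proof (proj1 (is_lim_seq_Reals _ _) (ex_series_lim_0 _ Hex)) as H0.
  destruct (maj_by_pos _ (exist _ 0 H0)) as [M [_ HM]]. exists M. intros n.
  rewrite Rabs_mult, (Rabs_pos_eq (Rabs x ^ n)) by (apply pow_le, Rabs_pos).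
  rewrite RPow_abs, <- Rabs_mult. apply HM.
Qed.

Lemma CV_radius_decr_n (a : nat -> R) n : CV_radius (PS_decr_n a n) = CV_radius a.
Proof.
  induction n as [|n IH]; [apply CV_radius_ext; reflexivity|].
  rewrite <- IH, <- (CV_radius_decr_1 (PS_decr_n a n)). apply CV_radius_ext. intros k.
  unfold PS_decr_n, PS_decr_1. f_equal. lia.
Qed.

Lemma continuity_pt_eq_0 (g : R -> R) M d : continuity_pt g 0 -> 0 < d ->
  (forall t, 0 < Rabs t < d -> Rabs (g t) <= M * Rabs t) -> g 0 = 0.
Proof.
  intros Hg Hd Hle. apply cond_eq. intros eps Heps. rewrite Rminus_0_r.
  destruct (Hg (eps / 2) ltac:(lra)) as [al [Hal Hcl]].
  set (t := Rmin (Rmin d al) (eps / (2 * (Rabs M + 1))) / 2).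
  pose proof (Rabs_pos M).
  assert (Hm : 0 < Rmin (Rmin d al) (eps / (2 * (Rabs M + 1))))
    by (repeat apply Rmin_glb_lt; try apply Rdiv_lt_0_compat; lra).
  assert (Hm1 := Rmin_l (Rmin d al) (eps / (2 * (Rabs M + 1)))).
  assert (Hm2 := Rmin_r (Rmin d al) (eps / (2 * (Rabs M + 1)))).
  pose proof (Rmin_l d al). pose proof (Rmin_r d al).
  assert (Ht : Rabs t = t) by (apply Rabs_pos_eq; unfold t; lra).
  assert (Hct : D_x no_cond 0 t /\ R_dist t 0 < al).
  { split; [split; [exact I|unfold t; intro; lra]|].
    unfold R_dist. rewrite Rminus_0_r, Ht. unfold t; lra. }
  specialize (Hcl t Hct). simpl in Hcl. unfold R_dist in Hcl.
  specialize (Hle t ltac:(rewrite Ht; unfold t; lra)). rewrite Ht in Hle.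
  assert (HMt : M * t <= eps / 2).
  { apply Rle_trans with (Rabs M * t); [apply Rmult_le_compat_r; [unfold t; lra|apply Rle_abs]|].
    assert (t * (2 * (Rabs M + 1)) <= eps); [|nra].
    apply (Rmult_le_reg_r (/ (2 * (Rabs M + 1)))); [apply Rinv_0_lt_compat; lra|].
    replace (t * (2 * (Rabs M + 1)) * / (2 * (Rabs M + 1))) with t by (field; lra). unfold t. lra. }
  pose proof (Rabs_triang_inv (g 0) (g t)). rewrite Rabs_minus_sym in Hcl. lra.
Qed.

Lemma pseries_coef_vanish (d : nat -> R) r C K : 0 < r ->
  (forall t, 0 < Rabs t < r ->
     exists s, is_series (fun m => d m * t ^ m) s /\ Rabs s <= C * Rabs t ^ K) ->
  forall n, (n < K)%nat -> d n = 0.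
Proof.
  intros Hr Hs.
  assert (Hrad : Rbar_lt 0 (CV_radius d)).
  { destruct (Hs (r / 2)) as [s [Hs2 _]]; [rewrite Rabs_pos_eq; lra|].
    eapply Rbar_lt_le_trans; [|apply CV_radius_ge; exists s; exact Hs2].
    rewrite Rabs_pos_eq by lra. simpl. lra. }
  intros n. induction n as [n IH] using (well_founded_induction lt_wf). intros HnK.
  set (g := PSeries (PS_decr_n d n)).
  assert (Hg0 : g 0 = d n) by (unfold g; rewrite PSeries_0; unfold PS_decr_n; f_equal; lia).
  rewrite <- Hg0. apply (continuity_pt_eq_0 g (Rabs C) (Rmin r 1)).
  - apply PSeries_continuity. rewrite CV_radius_decr_n, Rabs_R0. exact Hrad.
  - apply Rmin_glb_lt; lra.
  - intros t Ht. pose proof (Rmin_l r 1). pose proof (Rmin_r r 1).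
    destruct (Hs t ltac:(lra)) as [s [Hst HsC]].
    assert (Hdec : s = t ^ n * g t).
    { unfold g. rewrite <- (PSeries_decr_n_aux d n t) by (intros k Hk; apply IH; lia).
      symmetry. apply is_series_unique, Hst. }
    assert (Htn : 0 < Rabs t ^ n) by (apply pow_lt; lra).
    assert (HK : Rabs t ^ K = Rabs t ^ n * Rabs t ^ (K - n)) by (rewrite <- pow_add; f_equal; lia).
    assert (Hpow : 0 <= Rabs t ^ (K - n) <= Rabs t).
    { destruct (K - n)%nat as [|j] eqn:Hj; [lia|]. simpl.
      pose proof (pow_incr (Rabs t) 1 j ltac:(lra)). rewrite pow1 in *.
      pose proof (pow_le (Rabs t) j (Rabs_pos t)). split; nra. }
    rewrite Hdec, Rabs_mult, <- RPow_abs, HK in HsC.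
    assert (Hg : Rabs (g t) <= C * Rabs t ^ (K - n)) by nra.
    pose proof (Rle_abs C). pose proof (Rabs_pos C). nra.
Qed.

Lemma pseries_coef_unique (a b : nat -> R) r C K : 0 < r ->
  (forall t, 0 < Rabs t < r -> exists s, is_series (fun m => a m * t ^ m) s /\
     Rabs (s - fsum K (fun m => b m * t ^ m)) <= C * Rabs t ^ K) ->
  forall n, (n < K)%nat -> a n = b n.
Proof.
  intros Hr Hs n Hn.
  set (bK := fun m => if (m <? K)%nat then b m else 0).
  assert (HbK : forall t, is_series (fun m => bK m * t ^ m) (fsum K (fun m => b m * t ^ m))).
  { intros t. rewrite (fsum_ext K _ (fun m => bK m * t ^ m))
      by (intros m Hm; unfold bK; apply Nat.ltb_lt in Hm; rewrite Hm; reflexivity).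
    apply is_series_fsum. intros m Hm. unfold bK. apply Nat.ltb_ge in Hm. rewrite Hm. ring. }
  enough (Hd : a n - bK n = 0)
    by (unfold bK in Hd; apply Nat.ltb_lt in Hn; rewrite Hn in Hd; lra).
  revert n Hn. apply (pseries_coef_vanish _ r C K Hr). intros t Ht.
  destruct (Hs t Ht) as [s [Has HsC]]. exists (s - fsum K (fun m => b m * t ^ m)). split; [|exact HsC].
  eapply is_series_ext; [|replace (s - _) with (1 * s + -1 * fsum K (fun m => b m * t ^ m)) by ring;
    apply (is_series_lin _ _ _ _ 1 (-1) Has (HbK t))].
  intros m. simpl. ring.
Qed.

Definition bernoulli_tanh_coef (B : nat -> R) (n : nat) : R :=
  B n * (2 ^ n * (2 ^ n - 1)) / INR (fact n).

Lemma bernoulli_t_tanh (B : nat -> R) (HB : is_bernoulli B) t : 0 < Rabs t < PI / 2 ->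
  is_series (fun n => bernoulli_tanh_coef B n * t ^ n) (t * tanh t - t).
Proof.
  intros Ht. pose proof PI_RGT_0.
  assert (H4 := HB (4 * t) ltac:(rewrite Rabs_mult, (Rabs_pos_eq 4) by lra; lra)).
  assert (H2 := HB (2 * t) ltac:(rewrite Rabs_mult, (Rabs_pos_eq 2) by lra; lra)).
  apply is_series_Reals in H4, H2.
  replace (t * tanh t - t) with (1 * (4 * t / (exp (4 * t) - 1)) + -1 * (2 * t / (exp (2 * t) - 1))).
  - eapply is_series_ext; [|exact (is_series_lin _ _ _ _ 1 (-1) H4 H2)].
    intros n. unfold bernoulli_tanh_coef. simpl.
    rewrite !Rpow_mult_distr. replace 4 with (2 * 2) by ring. rewrite Rpow_mult_distr.
    pose proof (INR_fact_neq_0 n). field. exact H0.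
  - assert (Ht0 : t <> 0) by (intros ->; rewrite Rabs_R0 in Ht; lra).
    set (E := exp t). assert (HE : 0 < E) by apply exp_pos.
    assert (H2t : exp (2 * t) = E * E) by apply exp_double.
    assert (H4t : exp (4 * t) = (E * E) * (E * E))
      by (replace (4 * t) with (2 * (2 * t)) by ring; rewrite exp_double, H2t; ring).
    assert (HE2 : E * E <> 1).
    { rewrite <- H2t, <- exp_0. intros Heq. apply exp_inv in Heq. lra. }
    rewrite H2t, H4t. unfold tanh, sinh, cosh. rewrite exp_Ropp. fold E.
    assert (E * E + 1 <> 0) by nra.
    field. repeat split; try lra; nra.
Qed.

(* The coefficients of [t * tanh t - t] predicted by [tanh_expand]. *)
Definition pf_coef (n : nat) : R :=
  match n with
  | O => 0
  | 1%nat => -1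
  | S (S m) => if Nat.even m then tanh_coef (Nat.div2 m) else 0
  end.

Lemma pf_coef_even j : pf_coef (2 * j + 2) = tanh_coef j.
Proof.
  replace (2 * j + 2)%nat with (S (S (2 * j))) by lia.
  change (pf_coef (S (S (2 * j)))) with (if Nat.even (2 * j) then tanh_coef (Nat.div2 (2 * j)) else 0).
  rewrite Nat.even_even, Nat.div2_double. reflexivity.
Qed.

Lemma pf_coef_odd j : pf_coef (2 * j + 3) = 0.
Proof.
  replace (2 * j + 3)%nat with (S (S (2 * j + 1))) by lia.
  change (pf_coef (S (S (2 * j + 1)))) with
    (if Nat.even (2 * j + 1) then tanh_coef (Nat.div2 (2 * j + 1)) else 0).
  rewrite Nat.even_odd. reflexivity.
Qed.

Lemma fsum_pf_coef N t :
  fsum (2 * N + 2) (fun n => pf_coef n * t ^ n) = fsum N (fun j => tanh_coef j * t ^ (2 * j + 2)) - t.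
Proof.
  induction N as [|N IH]; [simpl; ring|].
  replace (2 * S N + 2)%nat with (S (S (2 * N + 2))) by lia. cbn [fsum]. rewrite IH.
  replace (S (2 * N + 2)) with (2 * N + 3)%nat by lia. rewrite pf_coef_even, pf_coef_odd. ring.
Qed.

Lemma bernoulli_tanh_coef_even (B : nat -> R) (HB : is_bernoulli B) j :
  bernoulli_tanh_coef B (2 * j + 2) = tanh_coef j.
Proof.
  set (N := S j). pose proof PI_RGT_0. rewrite <- pf_coef_even.
  apply (pseries_coef_unique _ _ (PI / 2) (2 ^ (2 * N + 3) / PI ^ (2 * N) * rem_sum N 0) (2 * N + 2));
    [lra| |unfold N; lia].
  intros t Ht. exists (t * tanh t - t). split; [exact (bernoulli_t_tanh B HB t Ht)|].
  rewrite fsum_pf_coef, (tanh_expand N t).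
  replace (t * (_ + tanh_rem N t) - t - _) with (t * tanh_rem N t).
  - apply t_tanh_rem_bound.
  - rewrite Rmult_plus_distr_l, <- fsum_scal.
    rewrite (fsum_ext N (fun k => t * _) (fun k => tanh_coef k * t ^ (2 * k + 2)))
      by (intros k _; replace (2 * k + 2)%nat with (S (2 * k + 1)) by lia; simpl; ring).
    ring.
Qed.

Lemma dirichlet_lambda_pos s : (2 <= s)%nat -> 0 < dirichlet_lambda s.
Proof.
  intros Hs. apply (Series_pos (fun k => / (2 * INR k + 1) ^ s));
    [intros k; apply inv_odd_pow_bounds, Hs|].
  apply Series_correct, ex_series_inv_odd_pow, Hs.
Qed.

Lemma rem_sum_lt_lambda N t : t <> 0 -> PI ^ 2 * rem_sum N t < dirichlet_lambda (2 * N + 2).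
Proof.
  intros Ht. apply Rlt_0_minus. unfold dirichlet_lambda, rem_sum.
  replace (_ - _) with (1 * Series (fun k => / (2 * INR k + 1) ^ (2 * N + 2))
                        + - PI ^ 2 * Series (rem_term N t)) by ring.
  refine (Series_pos _ _ _ (is_series_lin _ _ _ _ _ _ (Series_correct _ (ex_series_inv_odd_pow _ _))
                                                   (Series_correct _ (ex_series_rem_term N t)))).
  2: lia.
  intros k. unfold rem_term. pose proof (odd_ge_1 k). pose proof PI2_ge_4. rewrite pow_add.
  assert (0 < (2 * INR k + 1) ^ (2 * N)) by (apply pow_lt; lra).
  assert (0 < t ^ 2) by (apply pow2_gt_0, Ht).
  assert (0 < PI ^ 2 * (2 * INR k + 1) ^ 2 + 4 * t ^ 2) by nra.
  replace (_ + _) with (4 * t ^ 2 / ((2 * INR k + 1) ^ (2 * N) * (2 * INR k + 1) ^ 2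
                         * (PI ^ 2 * (2 * INR k + 1) ^ 2 + 4 * t ^ 2))) by (field; repeat split; nra).
  apply Rdiv_lt_0_compat; [lra|]. apply Rmult_lt_0_compat; [apply Rmult_lt_0_compat|]; nra.
Qed.

Lemma tanh_rem_eq_xi N t : tanh_rem N t =
  PI ^ 2 * rem_sum N t / dirichlet_lambda (2 * N + 2) * (tanh_coef N * t ^ (2 * N + 1)).
Proof.
  pose proof (dirichlet_lambda_pos (2 * N + 2) ltac:(lia)). pose proof PI_RGT_0.
  unfold tanh_rem, tanh_coef. rewrite (pow_add PI (2 * N) 2).
  field. split; [lra|]. split; [apply pow_nonzero|]; lra.
Qed.

Lemma tanh_term_succ (B : nat -> R) (HB : is_bernoulli B) t j :
  tanh_term B t (S j) = tanh_coef j * t ^ (2 * j + 1).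
Proof.
  rewrite <- (bernoulli_tanh_coef_even B HB j). unfold tanh_term, bernoulli_tanh_coef.
  replace (2 * S j)%nat with (2 * j + 2)%nat by lia.
  replace (2 * j + 2 - 1)%nat with (2 * j + 1)%nat by lia.
  unfold Rdiv. ring.
Qed.

Lemma sum1_tanh_term (B : nat -> R) (HB : is_bernoulli B) N t :
  sum1 N (tanh_term B t) = fsum N (fun j => tanh_coef j * t ^ (2 * j + 1)).
Proof.
  induction N as [|N IH]; [reflexivity|].
  simpl sum1. rewrite IH, tanh_term_succ by exact HB. reflexivity.
Qed.

Theorem theorem2 (B : nat -> R) (HB : is_bernoulli B) (N : nat) :
  (forall t : R,
     exists S : R,
       infinite_sum
         (fun k => 1 / ((2 * INR k + 1) ^ (2 * N)%nat *
                        (PI ^ 2 * (2 * INR k + 1) ^ 2 + 4 * t ^ 2))) S /\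
       tanh t = sum1 N (tanh_term B t)
                + (-1) ^ N * 2 ^ (2 * N + 3)%nat * t ^ (2 * N + 1)%nat / PI ^ (2 * N)%nat * S)
  /\
  (forall t : R, t <> 0 ->
     exists xi : R, 0 < xi < 1 /\
       tanh t = sum1 N (tanh_term B t) + xi * tanh_term B t (N + 1)%nat).
Proof.
  split.
  - intros t. exists (rem_sum N t). split.
    + apply is_series_Reals, Series_correct, ex_series_rem_term.
    + rewrite sum1_tanh_term by exact HB. apply tanh_expand.
  - intros t Ht. pose proof (dirichlet_lambda_pos (2 * N + 2) ltac:(lia)).
    pose proof (rem_sum_pos N t). pose proof (rem_sum_lt_lambda N t Ht). pose proof PI_RGT_0.
    exists (PI ^ 2 * rem_sum N t / dirichlet_lambda (2 * N + 2)). split.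
    + split; [apply Rdiv_lt_0_compat; [apply Rmult_lt_0_compat; [apply pow_lt|]|]; lra|].
      apply Rlt_div_l; lra.
    + rewrite sum1_tanh_term, (tanh_expand N t), tanh_rem_eq_xi by exact HB.
      replace (N + 1)%nat with (S N) by lia. rewrite tanh_term_succ by exact HB. reflexivity.
Qed.
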